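(* Let $Z\subseteq\{0,1\}^n$ be nonempty and $\bm a,\bm c\in\mathbb R^n$. The problem $$\text{(I)}\quad \min\ \bm a^\top\bm x+\bm c^\top\bm z\ \ \text{s.t.}\ \ \|\bm x\|_2^2\le1,\ x_i(1-z_i)=0\ (i=1,\dots,n),\ \bm x\in\mathbb R^n,\ \bm z\in Z$$ is equivalent to the problem $$\text{(II)}\quad \min\ \bm a^\top\bm x+\bm c^\top\bm z\ \ \text{s.t.}\ \ (\bm x,\bm z)\in P(\bm a),$$ in the sense that (I) and (II) have the same optimal objective value and there exists an optimal solution of (II) that is also optimal for (I).
   Context: For $\bm\alpha\in\mathbb R^n$, $P_0(\bm\alpha)=\{(\bm x,\bm z)\in\mathbb R^n\times Z:\ \sum_{i=1}^n|\alpha_ix_i|\le\sqrt{\sum_{i=1}^n\alpha_i^2z_i}\}$ and $P(\bm\alpha)=\operatorname{conv}(P_0(\bm\alpha))$, the convex hull. *)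

From HB Require Import structures.
From mathcomp Require Import all_boot all_order all_algebra.
From mathcomp Require Import reals.
Set Implicit Arguments. Unset Strict Implicit. Unset Printing Implicit Defensive.
Import Order.TTheory GRing.Theory Num.Theory.
Local Open Scope ring_scope.

Definition dotv (R : realType) (n : nat) (a x : 'rV[R]_n) : R :=
  \sum_(i < n) a 0 i * x 0 i.

Definition P0 (R : realType) (n : nat) (Z : 'rV[R]_n -> Prop) (alpha : 'rV[R]_n)
  (x z : 'rV[R]_n) : Prop :=
  Z z /\
  \sum_(i < n) `|alpha 0 i * x 0 i| <= Num.sqrt (\sum_(i < n) alpha 0 i ^+ 2 * z 0 i).

Definition conv_hull (R : realType) (n : nat) (S : 'rV[R]_n -> 'rV[R]_n -> Prop)
  (x z : 'rV[R]_n) : Prop :=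
  exists (m : nat) (lam : 'I_m -> R) (xs zs : 'I_m -> 'rV[R]_n),
    (forall k, 0 <= lam k) /\ \sum_(k < m) lam k = 1 /\
    (forall k, S (xs k) (zs k)) /\
    x = \sum_(k < m) lam k *: xs k /\ z = \sum_(k < m) lam k *: zs k.

Definition Phull (R : realType) (n : nat) (Z : 'rV[R]_n -> Prop) (alpha : 'rV[R]_n) :=
  conv_hull (P0 Z alpha).

Definition feasI (R : realType) (n : nat) (Z : 'rV[R]_n -> Prop) (x z : 'rV[R]_n) : Prop :=
  Z z /\ \sum_(i < n) x 0 i ^+ 2 <= 1 /\ (forall i, x 0 i * (1 - z 0 i) = 0).

(* For a binary z write s(z) = sqrt(sum_i a_i^2 z_i), the Euclidean norm of a restricted
   to the support of z.  Every point of P_0(a) satisfies a^T x >= -sum_i |a_i x_i| >= -s(z),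
   so the objective is bounded below on P_0(a) by g(z) = c^T z - s(z), and, being affine, by
   the same bound on its convex hull P(a).  Minimise g over the finite set Z at z0: the
   point x0 = -(a o z0)/s(z0) lies in P_0(a), is feasible for (I) and attains g(z0).
   Conversely, Cauchy-Schwarz puts every feasible point of (I) into P_0(a). *)

From HB Require Import structures.
From mathcomp Require Import all_boot all_order all_algebra.
From mathcomp Require Import boolp reals.
From mathcomp Require Import ring lra.
Import Order.TTheory GRing.Theory Num.Theory.
Local Open Scope ring_scope.

Lemma ex_minimizer (T : finType) d (U : orderType d) (P : T -> Prop) (F : T -> U) :
  (exists t, P t) -> exists2 t, P t & forall u, P u -> (F t <= F u)%O.
Proof.
move=> [t0 Pt0]; have Pb0 : `[< P t0 >] by apply/asboolP.
case: (@arg_minP _ _ _ t0 (fun t => `[< P t >]) F Pb0) => t /asboolP Pt t_min.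
by exists t => // u Pu; apply/t_min/asboolP.
Qed.

Section RealClosedField.
Context {R : rcfType}.

Lemma mulVsqrtr (x : R) : (Num.sqrt x)^-1 * x = Num.sqrt x.
Proof.
case: sqrtrP => [_|s _]; first by rewrite invr0 mul0r.
have [->|s_neq0] := eqVneq s 0; first by rewrite invr0 mul0r.
by rewrite expr2 mulrA mulVf ?mul1r.
Qed.

Context {n : nat}.
Implicit Types u v : 'I_n -> R.

Lemma sqrt_sumr_sqr_eq0 u v :
  Num.sqrt (\sum_i u i ^+ 2) = 0 -> \sum_i u i * v i = 0.
Proof.
move/eqP; rewrite sqrtr_eq0 => su_le0.
have u2_ge0 i : true -> 0 <= u i ^+ 2 by move=> _; exact: sqr_ge0.
have /eqP : \sum_i u i ^+ 2 = 0 by apply/le_anti; rewrite su_le0 sumr_ge0.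
rewrite psumr_eq0 // => /allP u0; apply: big1 => i _.
by move: (u0 i (mem_index_enum i)); rewrite sqrf_eq0 => /eqP ->; rewrite mul0r.
Qed.

Lemma sumr_mul_le_sqrt u v :
  \sum_i u i * v i <= Num.sqrt (\sum_i u i ^+ 2) * Num.sqrt (\sum_i v i ^+ 2).
Proof.
set A := Num.sqrt _; set B := Num.sqrt _.
have [A0|A_neq0] := eqVneq A 0.
  by rewrite (sqrt_sumr_sqr_eq0 _ v A0) A0 mul0r.
have [B0|B_neq0] := eqVneq B 0.
  under eq_bigr do rewrite mulrC.
  by rewrite (sqrt_sumr_sqr_eq0 _ u B0) B0 mulr0.
have AB_gt0 : 0 < A * B by rewrite mulr_gt0 // lt_def ?A_neq0 ?B_neq0 sqrtr_ge0.
have sumr_sqr_ge0 (w : 'I_n -> R) : 0 <= \sum_i w i ^+ 2.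
  by apply: sumr_ge0 => i _; exact: sqr_ge0.
have uA : \sum_i u i ^+ 2 = A ^+ 2 by rewrite sqr_sqrtr.
have vB : \sum_i v i ^+ 2 = B ^+ 2 by rewrite sqr_sqrtr.
have expand : \sum_i (B * u i - A * v i) ^+ 2 =
    B ^+ 2 * \sum_i u i ^+ 2 - 2 * (A * B) * \sum_i u i * v i + A ^+ 2 * \sum_i v i ^+ 2.
  rewrite !mulr_sumr -sumrB -big_split /=.
  by apply: eq_bigr => i _; ring.
have := sumr_sqr_ge0 (fun i => B * u i - A * v i).
by rewrite expand uA vB; nra.
Qed.

End RealClosedField.

Section ConvexHull.
Context {R : realType} {n : nat}.
Implicit Types (a c x z : 'rV[R]_n) (S : 'rV[R]_n -> 'rV[R]_n -> Prop).

Lemma dotv_sumZ m a (lam : 'I_m -> R) (xs : 'I_m -> 'rV[R]_n) :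
  dotv a (\sum_(k < m) lam k *: xs k) = \sum_(k < m) lam k * dotv a (xs k).
Proof.
rewrite /dotv; under eq_bigr => i _ do rewrite summxE mulr_sumr.
rewrite exchange_big /=; apply: eq_bigr => k _; rewrite mulr_sumr.
by apply: eq_bigr => i _; rewrite mxE mulrCA.
Qed.

Lemma conv_hull_self S x z : S x z -> conv_hull S x z.
Proof.
exists 1%N, (fun=> 1), (fun=> x), (fun=> z).
by rewrite !big_ord1 !scale1r.
Qed.

Lemma conv_hull_lb S a c (m : R) :
  (forall x z, S x z -> m <= dotv a x + dotv c z) ->
  forall x z, conv_hull S x z -> m <= dotv a x + dotv c z.
Proof.
move=> S_lb x z [k [lam [xs [zs [lam_ge0 [lam1 [Sk [-> ->]]]]]]]].
rewrite !dotv_sumZ -big_split /= -[m]mul1r -lam1 mulr_suml.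
apply: ler_sum => i _; rewrite -mulrDr; apply: ler_wpM2l => //.
exact: S_lb.
Qed.

Lemma dotv_ge_Nsum_abs a x : - \sum_i `|a 0 i * x 0 i| <= dotv a x.
Proof. by rewrite /dotv -sumrN; apply: ler_sum => i _; exact: lerNnormlW. Qed.

End ConvexHull.

Section Binary.
Context {R : realType} {n : nat}.

Definition binary (z : 'rV[R]_n) := forall i, z 0 i = 0 \/ z 0 i = 1.

Definition row_of_bits (b : {ffun 'I_n -> bool}) : 'rV[R]_n := \row_i (b i)%:R.

Lemma row_of_bitsK z : binary z -> row_of_bits [ffun i => z 0 i == 1] = z.
Proof.
move=> zbin; apply/rowP => i; rewrite !mxE ffunE.
by case: (zbin i) => ->; rewrite ?eqxx // eq_sym oner_eq0.
Qed.

Lemma ex_minimizer_binary (Z : 'rV[R]_n -> Prop) (F : 'rV[R]_n -> R) :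
  (forall z, Z z -> binary z) -> (exists z, Z z) ->
  exists2 z, Z z & forall z', Z z' -> F z <= F z'.
Proof.
move=> Zbin [z0 Zz0].
have [|b Zb b_min] := @ex_minimizer _ _ _ (fun b => Z (row_of_bits b)) (F \o row_of_bits).
  by exists [ffun i => z0 0 i == 1]; rewrite row_of_bitsK //; exact: Zbin.
exists (row_of_bits b) => // z Zz; rewrite -(row_of_bitsK _ (Zbin z Zz)).
by apply: b_min; rewrite row_of_bitsK //; exact: Zbin.
Qed.

End Binary.

Section Optimum.
Context {R : realType} {n : nat} (a : 'rV[R]_n).
Implicit Types x z : 'rV[R]_n.

Definition supp_norm z := Num.sqrt (\sum_i a 0 i ^+ 2 * z 0 i).

(* If supp_norm z = 0, the junk inverse 0^-1 = 0 gives xopt z = 0, which is still optimal. *)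
Definition xopt z : 'rV[R]_n := (- (supp_norm z)^-1) *: \row_i (a 0 i * z 0 i).

Lemma xoptE z i : xopt z 0 i = - (supp_norm z)^-1 * (a 0 i * z 0 i).
Proof. by rewrite !mxE. Qed.

Lemma supp_normV z : (supp_norm z)^-1 * \sum_i a 0 i ^+ 2 * z 0 i = supp_norm z.
Proof. exact: mulVsqrtr. Qed.

Lemma dotv_xopt z : dotv a (xopt z) = - supp_norm z.
Proof.
rewrite /dotv -[in RHS]supp_normV mulr_sumr -sumrN.
by apply: eq_bigr => i _; rewrite xoptE; ring.
Qed.

Lemma sum_abs_xopt z : binary z -> \sum_i `|a 0 i * xopt z 0 i| = supp_norm z.
Proof.
move=> zbin; rewrite -[in RHS]supp_normV mulr_sumr; apply: eq_bigr => i _.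
rewrite xoptE; case: (zbin i) => ->; first by rewrite !mulr0 normr0.
rewrite !mulr1 mulrCA normrM normrN normfV -expr2 !ger0_norm ?sqr_ge0 //.
exact: sqrtr_ge0.
Qed.

Lemma xopt_sqr_sum z : binary z -> \sum_i xopt z 0 i ^+ 2 <= 1.
Proof.
move=> zbin.
have -> : \sum_i xopt z 0 i ^+ 2 =
    (supp_norm z)^-1 * ((supp_norm z)^-1 * \sum_i a 0 i ^+ 2 * z 0 i).
  rewrite !mulr_sumr; apply: eq_bigr => i _; rewrite xoptE.
  by case: (zbin i) => ->; ring.
rewrite supp_normV.
by have [->|s_neq0] := eqVneq (supp_norm z) 0; rewrite ?mulr0 ?mulVf.
Qed.

Lemma xopt_supp z : binary z -> forall i, xopt z 0 i * (1 - z 0 i) = 0.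
Proof. by move=> zbin i; rewrite xoptE; case: (zbin i) => ->; ring. Qed.

Lemma feasible_sum_abs_le x z :
  binary z -> \sum_i x 0 i ^+ 2 <= 1 -> (forall i, x 0 i * (1 - z 0 i) = 0) ->
  \sum_i `|a 0 i * x 0 i| <= supp_norm z.
Proof.
move=> zbin x_le1 x_supp.
have -> : \sum_i `|a 0 i * x 0 i| = \sum_i `|a 0 i * z 0 i| * `|x 0 i|.
  apply: eq_bigr => i _; rewrite -normrM; move: (x_supp i).
  by case: (zbin i) => ->; rewrite ?subr0 ?mulr1 // => ->; rewrite !mulr0.
apply: le_trans (sumr_mul_le_sqrt _ _) _.
have -> : \sum_i `|a 0 i * z 0 i| ^+ 2 = \sum_i a 0 i ^+ 2 * z 0 i.
  by apply: eq_bigr => i _; rewrite real_normK ?num_real //; case: (zbin i) => ->; ring.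
have -> : \sum_i `|x 0 i| ^+ 2 = \sum_i x 0 i ^+ 2.
  by apply: eq_bigr => i _; rewrite real_normK ?num_real.
rewrite -/(supp_norm z) -[leRHS]mulr1 ler_wpM2l ?sqrtr_ge0 // -sqrtr1.
exact: ler_wsqrtr.
Qed.

End Optimum.

Theorem proposition3 (R : realType) (n : nat) (Z : 'rV[R]_n -> Prop)
  (a c : 'rV[R]_n) :
  (forall z, Z z -> forall i, z 0 i = 0 \/ z 0 i = 1) ->
  (exists z, Z z) ->
  exists x z : 'rV[R]_n,
    (* (x,z) is optimal for (II) *)
    (Phull Z a x z /\
     forall x' z', Phull Z a x' z' -> dotv a x + dotv c z <= dotv a x' + dotv c z') /\
    (* (x,z) is optimal for (I) *)
    (feasI Z x z /\
     forall x' z', feasI Z x' z' -> dotv a x + dotv c z <= dotv a x' + dotv c z').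
Proof.
move=> Zbin Z_neq0.
pose g z := dotv c z - supp_norm a z.
have [zs Zzs zs_min] := ex_minimizer_binary _ g Zbin Z_neq0.
have zs_bin : binary zs := Zbin zs Zzs.
have P0_lb x z : P0 Z a x z -> g zs <= dotv a x + dotv c z.
  case=> Zz xz_le; apply: le_trans (zs_min z Zz) _.
  by have := dotv_ge_Nsum_abs a x; rewrite /g /supp_norm; lra.
have P0_opt : P0 Z a (xopt a zs) zs.
  by split; rewrite // sum_abs_xopt.
have feas_opt : feasI Z (xopt a zs) zs.
  by split; [|split; [exact: xopt_sqr_sum | exact: xopt_supp]].
exists (xopt a zs), zs.
rewrite dotv_xopt addrC -/(g zs); split; split => //.
- exact: conv_hull_self.
- exact: conv_hull_lb.
- move=> x z [Zz [x_le1 x_supp]]; apply: P0_lb; split => //.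
  exact: feasible_sum_abs_le (Zbin z Zz) x_le1 x_supp.
Qed.
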